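(* Let $R>0$, let $K\subset\mathbb{R}^2$ be the closed disk of radius $R$ centered at the origin, and let $f\colon\mathbb{R}\to(0,\infty)$ be a continuously differentiable convex function with $t^2+f(t)^2>R^2$ for all $t$; let $L=\{(t,y)\mid f(t)\le y\}$. Put $$\alpha(t)=\frac{tf'(t)-f(t)}{\sqrt{1+f'(t)^2}}.$$ Then for every point $(x,y)$ with $d((x,y),K)=d((x,y),L)$ there is $t\in\mathbb{R}$ with $\alpha(t)<R$ (namely, $(t,f(t))$ is the point of $L$ nearest to $(x,y)$) such that $$x=t+\frac{f'(t)}{2\sqrt{1+f'(t)^2}}\cdot\frac{t^2+f(t)^2-R^2}{R-\alpha(t)},\qquad y=f(t)-\frac{1}{2\sqrt{1+f'(t)^2}}\cdot\frac{t^2+f(t)^2-R^2}{R-\alpha(t)}.$$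
   Context: $d(p,A)=\inf\{|p-q|\mid q\in A\}$ (Euclidean distance). *)

From Stdlib Require Import Reals.
From Coquelicot Require Import Coquelicot.
Open Scope R_scope.

Definition euclid (p q : R * R) : R :=
  sqrt ((fst p - fst q) ^ 2 + (snd p - snd q) ^ 2).

Definition dist_set (p : R * R) (A : R * R -> Prop) : Rbar :=
  Glb_Rbar (fun r => exists q, A q /\ r = euclid p q).

Definition disk (Rad : R) : R * R -> Prop :=
  fun q => fst q ^ 2 + snd q ^ 2 <= Rad ^ 2.

Definition epi (f : R -> R) : R * R -> Prop :=
  fun q => f (fst q) <= snd q.

Definition convex_fun (f : R -> R) : Prop :=
  forall x y l, 0 <= l <= 1 -> f (l * x + (1 - l) * y) <= l * f x + (1 - l) * f y.

Definition alpha (f : R -> R) (t : R) : R :=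
  (t * Derive f t - f t) / sqrt (1 + (Derive f t) ^ 2).

(* Let p = (x, y).  The squared distance from p to the graph of f is coercive,
   so it attains its minimum at some t, and stationarity puts p on the normal
   line there: p = (t + s f'(t), f(t) - s).  If s <= 0, the intermediate value
   theorem puts p in L, which lies outside K; then d(p, K) > 0 = d(p, L).  If
   s > 0, the tangent line inequality for the convex f makes (t, f(t)) the point
   of L nearest to p, so d(p, L) = s sqrt(1 + f'(t)^2) > 0.  Hence p is outside
   K and |p| - R = s sqrt(1 + f'(t)^2); squaring makes this linear in s, which
   yields both alpha(t) < R and the formulas for x and y. *)

From Stdlib Require Import Reals Lra Psatz.
From Coquelicot Require Import Coquelicot.
Open Scope R_scope.

Lemma euclid_nonneg (p q : R * R) : 0 <= euclid p q.
Proof. apply sqrt_pos. Qed.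

Lemma euclid_sqr (p q : R * R) :
  euclid p q ^ 2 = (fst p - fst q) ^ 2 + (snd p - snd q) ^ 2.
Proof. unfold euclid. apply pow2_sqrt, Rplus_le_le_0_compat; apply pow2_ge_0. Qed.

Lemma euclid_eq (p q : R * R) (d : R) :
  0 <= d -> (fst p - fst q) ^ 2 + (snd p - snd q) ^ 2 = d ^ 2 -> euclid p q = d.
Proof. intros Hd E. unfold euclid. rewrite E. now apply sqrt_pow2. Qed.

Lemma euclid_triangle (p q r : R * R) : euclid p r <= euclid p q + euclid q r.
Proof.
  destruct p as [x0 y0], q as [x1 y1], r as [x2 y2].
  unfold euclid; cbn [fst snd]. rewrite <- !Rsqr_pow2. apply triangle.
Qed.

Lemma dist_set_attained (p : R * R) (A : R * R -> Prop) (q0 : R * R) :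
  A q0 -> (forall q, A q -> euclid p q0 <= euclid p q) ->
  dist_set p A = Finite (euclid p q0).
Proof.
  intros Hq0 Hmin. apply is_glb_Rbar_unique. split.
  - intros r [q [Hq ->]]. now apply Hmin.
  - intros b Hb. apply Hb. now exists q0.
Qed.

Lemma dist_set_mem (p : R * R) (A : R * R -> Prop) : A p -> dist_set p A = Finite 0.
Proof.
  intros Hp. assert (Hpp : euclid p p = 0) by (apply euclid_eq; [lra | ring]).
  rewrite <- Hpp. apply dist_set_attained; auto.
  intros q _. rewrite Hpp. apply euclid_nonneg.
Qed.

Lemma disk_iff (Rad : R) (q : R * R) :
  0 <= Rad -> disk Rad q <-> euclid q (0, 0) <= Rad.
Proof.
  intros HR. unfold disk.
  pose proof (euclid_sqr q (0, 0)) as E. pose proof (euclid_nonneg q (0, 0)).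
  cbn [fst snd] in E. split; intro; nra.
Qed.

Lemma dist_set_disk (Rad : R) (p : R * R) :
  0 < Rad -> dist_set p (disk Rad) = Finite (Rmax 0 (euclid p (0, 0) - Rad)).
Proof.
  intros HR. set (N := euclid p (0, 0)).
  destruct (Rle_or_lt N Rad) as [Hin | Hout].
  - rewrite Rmax_left by lra. apply dist_set_mem, disk_iff; fold N; lra.
  - rewrite Rmax_right by lra.
    assert (HN : N ^ 2 = fst p ^ 2 + snd p ^ 2)
      by (unfold N; rewrite euclid_sqr; cbn [fst snd]; ring).
    set (q := (Rad / N * fst p, Rad / N * snd p)).
    assert (Hpq : euclid p q = N - Rad).
    { apply euclid_eq; [lra |]. unfold q; cbn [fst snd].
      replace ((fst p - Rad / N * fst p) ^ 2 + (snd p - Rad / N * snd p) ^ 2)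
        with ((1 - Rad / N) ^ 2 * (fst p ^ 2 + snd p ^ 2)) by ring.
      rewrite <- HN. field. lra. }
    rewrite <- Hpq. apply dist_set_attained.
    + unfold disk, q; cbn [fst snd].
      replace ((Rad / N * fst p) ^ 2 + (Rad / N * snd p) ^ 2)
        with ((Rad / N) ^ 2 * (fst p ^ 2 + snd p ^ 2)) by ring.
      rewrite <- HN. right. field. lra.
    + intros q' Hq'. apply disk_iff in Hq'; [| lra].
      pose proof (euclid_triangle p q' (0, 0)) as Htri. fold N in Htri. lra.
Qed.

Lemma slope_le_of_is_derive (phi : R -> R) (d c : R) :
  is_derive phi 0 d -> (forall l, 0 < l <= 1 -> phi l - phi 0 <= l * c) -> d <= c.
Proof.
  intros Hd Hslope. apply is_derive_Reals in Hd.
  apply Rnot_lt_le. intro Hcd.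
  destruct (Hd (d - c)) as [delta Hdelta]; [lra |].
  pose proof (cond_pos delta).
  set (l := Rmin 1 (delta / 2)).
  assert (Hl : 0 < l <= 1).
  { split; [apply Rmin_pos; lra | apply Rmin_l]. }
  assert (Hld : Rabs l < delta).
  { assert (l <= delta / 2) by apply Rmin_r. rewrite Rabs_right by lra. lra. }
  specialize (Hdelta l (Rgt_not_eq _ _ (proj1 Hl)) Hld). rewrite Rplus_0_l in Hdelta.
  apply Rabs_def2 in Hdelta.
  assert (E : phi l - phi 0 = (phi l - phi 0) / l * l) by (field; apply Rgt_not_eq; lra).
  specialize (Hslope l Hl). nra.
Qed.

Lemma convex_tangent_below (f : R -> R) (t D : R) :
  convex_fun f -> is_derive f t D -> forall a, f t + D * (a - t) <= f a.
Proof.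
  intros Hconv Hd a.
  enough (D * (a - t) <= f a - f t) by lra.
  apply (slope_le_of_is_derive (fun l => f (t + l * (a - t)))).
  - assert (Hline : is_derive (fun l : R => t + l * (a - t)) 0 (a - t))
      by (auto_derive; [exact I | ring]).
    assert (Hd0 : is_derive f (t + 0 * (a - t)) D) by now rewrite Rmult_0_l, Rplus_0_r.
    rewrite Rmult_comm. exact (is_derive_comp f _ 0 D (a - t) Hd0 Hline).
  - intros l Hl. replace (t + 0 * (a - t)) with t by ring.
    replace (t + l * (a - t)) with (l * a + (1 - l) * t) by ring.
    pose proof (Hconv a t l ltac:(lra)). lra.
Qed.

Lemma euclid_along_normal (t u D s : R) :
  0 <= s -> euclid (t + s * D, u - s) (t, u) = s * sqrt (1 + D ^ 2).
Proof.
  intros Hs. assert (Hw : 0 <= 1 + D ^ 2) by nra.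
  apply euclid_eq; [apply Rmult_le_pos; [lra | apply sqrt_pos] |]. cbn [fst snd].
  rewrite Rpow_mult_distr, pow2_sqrt by exact Hw. ring.
Qed.

(* By the tangent line inequality, the epigraph lies above the line through
   [(t, f t)] orthogonal to the offset direction [(D, -1)]. *)
Lemma epi_nearest_along_normal (f : R -> R) (t D s : R) :
  convex_fun f -> is_derive f t D -> 0 <= s ->
  forall q, epi f q -> euclid (t + s * D, f t - s) (t, f t) <= euclid (t + s * D, f t - s) q.
Proof.
  intros Hconv Hd Hs [a b] Hq. unfold epi in Hq; cbn [fst snd] in Hq.
  pose proof (convex_tangent_below f t D Hconv Hd a) as Htan.
  assert (0 <= s * (b - f t - D * (a - t))) by (apply Rmult_le_pos; lra).
  pose proof (pow2_ge_0 (t - a)). pose proof (pow2_ge_0 (f t - b)).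
  unfold euclid; cbn [fst snd]. apply sqrt_le_1_alt. nra.
Qed.

Lemma dist_set_epi_along_normal (f : R -> R) (t D s : R) :
  convex_fun f -> is_derive f t D -> 0 <= s ->
  dist_set (t + s * D, f t - s) (epi f) = Finite (s * sqrt (1 + D ^ 2)).
Proof.
  intros Hconv Hd Hs. rewrite <- (euclid_along_normal t (f t) D s Hs).
  apply dist_set_attained.
  - unfold epi; cbn [fst snd]. lra.
  - now apply epi_nearest_along_normal.
Qed.

Lemma epi_outside_disk (Rad : R) (f : R -> R) (q : R * R) :
  0 < Rad -> (forall t, 0 < f t) -> (forall t, t ^ 2 + f t ^ 2 > Rad ^ 2) ->
  epi f q -> Rad < euclid q (0, 0).
Proof.
  intros HR Hpos Hout Hq. apply Rnot_le_lt. rewrite <- disk_iff by lra.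
  destruct q as [a b]. unfold epi in Hq. unfold disk; cbn [fst snd] in *.
  specialize (Hpos a). specialize (Hout a). nra.
Qed.

Definition graph_sqdist (f : R -> R) (x y t : R) : R := (x - t) ^ 2 + (y - f t) ^ 2.

Lemma graph_sqdist_has_min (f : R -> R) (x y : R) :
  continuity f -> exists t0, forall t, graph_sqdist f x y t0 <= graph_sqdist f x y t.
Proof.
  intros Hc. set (g := graph_sqdist f x y).
  assert (Hg : forall t, continuity_pt g t) by (intro t; unfold g, graph_sqdist; reg).
  set (M := Rabs (y - f x) + 1).
  assert (HM : Rabs (y - f x) < M) by (unfold M; lra).
  pose proof (Rabs_pos (y - f x)).
  assert (Hfar : forall t, M < Rabs (x - t) -> g x < g t).
  { intros t Ht. unfold g, graph_sqdist.
    rewrite <- (pow2_abs (x - t)), <- (pow2_abs (y - f x)).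
    pose proof (pow2_ge_0 (y - f t)). nra. }
  destruct (continuity_ab_min g (x - M) (x + M)) as [t0 [Hmin _]]; [lra | intros; apply Hg |].
  exists t0. intro t.
  destruct (Rle_lt_dec (Rabs (x - t)) M) as [Hnear | Hfar'].
  - apply Hmin. apply Rabs_le_between' in Hnear. lra.
  - specialize (Hfar t Hfar'). specialize (Hmin x ltac:(lra)). lra.
Qed.

Lemma graph_sqdist_min_on_normal (f : R -> R) (x y t0 D : R) :
  is_derive f t0 D -> (forall t, graph_sqdist f x y t0 <= graph_sqdist f x y t) ->
  exists s, x = t0 + s * D /\ y = f t0 - s.
Proof.
  intros Hd Hmin.
  assert (Hg : derivable_pt_lim (graph_sqdist f x y) t0
                 (- 2 * (x - t0) - 2 * (y - f t0) * D)).
  { apply is_derive_Reals. unfold graph_sqdist. auto_derive.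
    - now exists D.
    - replace (Derive (fun u : R => f u) t0) with D by (symmetry; now apply is_derive_unique).
      ring. }
  assert (Hfermat : - 2 * (x - t0) - 2 * (y - f t0) * D = 0).
  { rewrite <- (derive_pt_eq_0 _ _ _ (exist _ _ Hg) Hg).
    apply (deriv_minimum _ (t0 - 1) (t0 + 1)); [lra | lra |].
    intros; apply Hmin. }
  exists (f t0 - y). split; [nra | ring].
Qed.

Lemma graph_min_below_mem_epi (f : R -> R) (x y t0 : R) :
  continuity f -> (forall t, graph_sqdist f x y t0 <= graph_sqdist f x y t) ->
  f t0 < y -> epi f (x, y).
Proof.
  intros Hc Hmin Hy. unfold epi; cbn [fst snd]. apply Rnot_lt_le. intro Hx.
  destruct (IVT_gen f t0 x y Hc) as [z [Hz Hfz]].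
  { split; [pose proof (Rmin_l (f t0) (f x)) | pose proof (Rmax_r (f t0) (f x))]; lra. }
  assert (Hzt : z <> t0) by (intros ->; lra).
  assert (Hcloser : (x - z) ^ 2 < (x - t0) ^ 2).
  { destruct (Rlt_or_le t0 x) as [Hlt | Hle].
    - rewrite Rmin_left, Rmax_right in Hz by lra.
      destruct Hz as [Hz1 Hz2]. destruct Hz1 as [Hz1 | ->]; [nra | easy].
    - rewrite Rmin_right, Rmax_left in Hz by lra.
      destruct Hz as [Hz1 Hz2]. destruct Hz2 as [Hz2 | ->]; [nra | easy]. }
  specialize (Hmin z). unfold graph_sqdist in Hmin. rewrite Hfz in Hmin.
  pose proof (pow2_ge_0 (y - f t0)). nra.
Qed.

(* Squaring [|p| = Rad + s w], with [w ^ 2 = 1 + D ^ 2], cancels the [s ^ 2] terms. *)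
Lemma bisector_offset_formulas (Rad : R) (f : R -> R) (t s : R) :
  0 < s -> Rad ^ 2 < t ^ 2 + f t ^ 2 ->
  euclid (t + s * Derive f t, f t - s) (0, 0) = Rad + s * sqrt (1 + Derive f t ^ 2) ->
  alpha f t < Rad /\
  t + s * Derive f t = t + Derive f t / (2 * sqrt (1 + Derive f t ^ 2))
                         * ((t ^ 2 + f t ^ 2 - Rad ^ 2) / (Rad - alpha f t)) /\
  f t - s = f t - 1 / (2 * sqrt (1 + Derive f t ^ 2))
                    * ((t ^ 2 + f t ^ 2 - Rad ^ 2) / (Rad - alpha f t)).
Proof.
  intros Hs Hout HN. unfold alpha.
  set (D := Derive f t) in *. set (w := sqrt (1 + D ^ 2)) in *.
  assert (Hw : 0 < w) by (apply sqrt_lt_R0; nra).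
  assert (Hw2 : w ^ 2 = 1 + D ^ 2) by (apply pow2_sqrt; nra).
  pose proof (euclid_sqr (t + s * D, f t - s) (0, 0)) as Hsq.
  rewrite HN in Hsq. cbn [fst snd] in Hsq.
  assert (Hkey : 2 * s * (Rad * w - (t * D - f t)) = t ^ 2 + f t ^ 2 - Rad ^ 2) by nra.
  assert (Hgap : 0 < Rad * w - (t * D - f t)) by nra.
  split; [apply Rlt_div_l; lra |].
  assert (w <> 0) by (apply Rgt_not_eq; exact Hw).
  assert (Rad * w - (t * D - f t) <> 0) by (apply Rgt_not_eq; exact Hgap).
  rewrite <- Hkey. split; field; split; assumption.
Qed.

Theorem theorem5 (Rad : R) (f : R -> R)
  (hR : 0 < Rad)
  (hpos : forall t, 0 < f t)
  (hdiff : forall t, ex_derive f t)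
  (hcont : forall t, continuous (Derive f) t)
  (hconv : convex_fun f)
  (hout : forall t, t ^ 2 + f t ^ 2 > Rad ^ 2)
  (x y : R)
  (heq : dist_set (x, y) (disk Rad) = dist_set (x, y) (epi f)) :
  exists t : R,
    alpha f t < Rad /\
    (forall q, epi f q -> euclid (x, y) (t, f t) <= euclid (x, y) q) /\
    x = t + Derive f t / (2 * sqrt (1 + (Derive f t) ^ 2))
            * ((t ^ 2 + f t ^ 2 - Rad ^ 2) / (Rad - alpha f t)) /\
    y = f t - 1 / (2 * sqrt (1 + (Derive f t) ^ 2))
            * ((t ^ 2 + f t ^ 2 - Rad ^ 2) / (Rad - alpha f t)).
Proof.
  assert (Hd : forall t, is_derive f t (Derive f t)) by (intro t; now apply Derive_correct).
  assert (Hc : continuity f) by (intro t; apply continuity_pt_filterlim,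
    (ex_derive_continuous (V := R_NormedModule)), hdiff).
  destruct (graph_sqdist_has_min f x y Hc) as [t Hmin].
  destruct (graph_sqdist_min_on_normal f x y t _ (Hd t) Hmin) as [s [-> ->]].
  rewrite (dist_set_disk _ _ hR) in heq.
  destruct (Rle_or_lt s 0) as [Hs | Hs].
  - exfalso.
    assert (Hp : epi f (t + s * Derive f t, f t - s)).
    { destruct (Req_dec s 0) as [-> | Hs0].
      - unfold epi; cbn [fst snd]. rewrite Rmult_0_l, Rplus_0_r. lra.
      - apply (graph_min_below_mem_epi f _ _ t Hc Hmin). lra. }
    rewrite (dist_set_mem _ _ Hp) in heq. apply Rbar_finite_eq in heq.
    pose proof (epi_outside_disk Rad f _ hR hpos hout Hp).
    pose proof (Rmax_r 0 (euclid (t + s * Derive f t, f t - s) (0, 0) - Rad)). lra.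
  - rewrite (dist_set_epi_along_normal f t _ s hconv (Hd t)) in heq by lra.
    apply Rbar_finite_eq in heq.
    assert (HN : euclid (t + s * Derive f t, f t - s) (0, 0)
                 = Rad + s * sqrt (1 + Derive f t ^ 2)).
    { assert (0 < s * sqrt (1 + Derive f t ^ 2))
        by (apply Rmult_lt_0_compat; [lra | apply sqrt_lt_R0; nra]).
      revert heq. apply Rmax_case_strong; intros; lra. }
    destruct (bisector_offset_formulas Rad f t s Hs (hout t) HN) as [Ha [Hx Hy]].
    exists t. repeat split; auto.
    apply epi_nearest_along_normal; auto; lra.
Qed.
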